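(* Let $n\ge2$ be an integer, $x_0,t_0\in\mathbb{R}$, $\beta>0$, $\lambda>0$, $\psi(t,x)=(x-x_0)^2-\beta(t-t_0)^2$, $\ell=\lambda\psi$, and let $w\in C^\infty(\mathbb{R}^2;\mathbb{R})$. With $I_2(w)$ as defined in the context, there exist expressions $A,B$, each a finite sum of terms of the form $c\,\ell_x^{\,a}\ell_{xx}^{\,b}\,\partial_x^{i}u_1\,\partial_x^{j}u_2$ with $u_1,u_2\in\{w,\partial_t w\}$, such that pointwise $$\partial_t w\; I_2(w)=\partial_t A+\partial_x B+\sum_{(r,s,m)\in D_C}d_C(r,s,m)\,\ell_x^{\,r}\ell_{xx}^{\,s}\,\partial_x^m\partial_t w\,\partial_x^{m+1}w,$$ where $D_C=\{(r,s,m)\in\mathbb{Z}_{\ge0}^3:\ r+2s+2m+1=n,\ s\ge3,\ s\text{ odd}\}$ and $$d_C(r,s,m)=(-1)^{n+m}\frac{(s-1)(2m+s)(n-2m-s-1)}{2(m+s)}\binom{n}{2m+s+1}\binom{m+s}{s}\prod_{j=1}^{s-1}(r+j).$$ In particular, if $n\le 6$ then $\partial_t w\,I_2(w)=\partial_tA+\partial_xB$.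
   Context: $\binom{j}{k}$ denotes the binomial coefficient (zero unless $0\le k\le j$). $$I_2(w)=\sum_{\substack{k\in[0,n]\\ k\ \text{even}}}\binom{n}{k}(-1)^{n-k}\ell_x^{\,n-k}\partial_x^k w-\binom{n}{2}\ell_{xx}\sum_{\substack{j\in[0,n-2]\\ j\ \text{odd}}}\binom{n-2}{j}(-1)^{n-2-j}\ell_x^{\,n-2-j}\partial_x^j w.$$ *)

From Stdlib Require Import Reals Arith List.
From Coquelicot Require Import Coquelicot.
Open Scope R_scope.

Definition dx (f : R -> R -> R) : R -> R -> R :=
  fun t x => Derive (fun y => f t y) x.
Definition dt (f : R -> R -> R) : R -> R -> R :=
  fun t x => Derive (fun s => f s x) t.

Fixpoint dxn (k : nat) (f : R -> R -> R) : R -> R -> R :=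
  match k with O => f | S k' => dx (dxn k' f) end.

Fixpoint pd (l : list bool) (f : R -> R -> R) : R -> R -> R :=
  match l with
  | nil => f
  | b :: l' => if b then dt (pd l' f) else dx (pd l' f)
  end.

Definition smooth2 (f : R -> R -> R) : Prop :=
  forall (l : list bool) (t x : R),
    ex_derive (fun s => pd l f s x) t /\
    ex_derive (fun y => pd l f t y) x /\
    continuous (fun p : R * R => pd l f (fst p) (snd p)) (t, x).

Definition psi (x0 t0 beta : R) : R -> R -> R :=
  fun t x => (x - x0) ^ 2 - beta * (t - t0) ^ 2.
Definition ell (x0 t0 beta lam : R) : R -> R -> R :=
  fun t x => lam * psi x0 t0 beta t x.
Definition lx (x0 t0 beta lam : R) := dx (ell x0 t0 beta lam).
Definition lxx (x0 t0 beta lam : R) := dx (dx (ell x0 t0 beta lam)).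

Definition binom (j k : nat) : R := if (k <=? j)%nat then Binomial.C j k else 0.

Definition I2 (n : nat) (x0 t0 beta lam : R) (w : R -> R -> R) (t x : R) : R :=
  sum_f_R0 (fun k => if Nat.even k then
      binom n k * (-1) ^ (n - k) * (lx x0 t0 beta lam t x) ^ (n - k) * dxn k w t x
    else 0) n
  - binom n 2 * lxx x0 t0 beta lam t x *
    sum_f_R0 (fun j => if Nat.odd j then
      binom (n - 2) j * (-1) ^ (n - 2 - j) * (lx x0 t0 beta lam t x) ^ (n - 2 - j)
        * dxn j w t x
    else 0) (n - 2).

(* A term  c * ell_x^a * ell_xx^b * d_x^i u1 * d_x^j u2,  u1,u2 in {w, d_t w}
   (false = w, true = d_t w). *)
Record term := mkTerm
  { tc : R; ta : nat; tb : nat; ti : nat; tj : nat; tu1 : bool; tu2 : bool }.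

Definition selw (w : R -> R -> R) (u : bool) : R -> R -> R :=
  if u then dt w else w.

Definition eval_term (x0 t0 beta lam : R) (w : R -> R -> R) (T : term) (t x : R) : R :=
  tc T * (lx x0 t0 beta lam t x) ^ (ta T) * (lxx x0 t0 beta lam t x) ^ (tb T)
    * dxn (ti T) (selw w (tu1 T)) t x * dxn (tj T) (selw w (tu2 T)) t x.

Definition eval_expr (x0 t0 beta lam : R) (w : R -> R -> R) (A : list term) (t x : R) : R :=
  fold_right (fun T acc => eval_term x0 t0 beta lam w T t x + acc) 0 A.

Definition rising (r s : nat) : R :=
  fold_right (fun j acc => (INR r + INR j) * acc) 1 (seq 1 (s - 1)).

Definition dC (n r s m : nat) : R :=
  (-1) ^ (n + m) *
  ((INR s - 1) * INR (2 * m + s) * (INR n - 2 * INR m - INR s - 1))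
    / (2 * INR (m + s))
  * binom n (2 * m + s + 1) * binom (m + s) s * rising r s.

Definition inDC (n r s m : nat) : bool :=
  ((r + 2 * s + 2 * m + 1 =? n)%nat && (3 <=? s)%nat && Nat.odd s)%bool.

(* sum over D_C (every element of D_C has r,s,m <= n) *)
Definition sumDC (n : nat) (F : nat -> nat -> nat -> R) : R :=
  sum_f_R0 (fun r => sum_f_R0 (fun s => sum_f_R0 (fun m =>
    if inDC n r s m then F r s m else 0) n) n) n.

From Stdlib Require Import Reals Arith List Lia Lra.
From Coquelicot Require Import Coquelicot.
Open Scope R_scope.

(* Since ell_x = 2 lam (x - x0) does not depend on t and ell_xx = 2 lam is constant, the
   monomials V(a,b,i,j) = ell_x^a ell_xx^b (d_x^i d_t w) (d_x^j w) satisfy, modulo t- and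
   x-divergences of such monomials,
     V(a,b,i,i) = d_t (ell_x^a ell_xx^b (d_x^i w)^2 / 2) ~ 0,
     V(a,b,i,j+1) ~ - a V(a-1,b+1,i,j) - V(a,b,i+1,j)      (integration by parts in x).
   Iterating, V(a,b,i,i+d) ~ sum over d = 2m+1+q of (-1)^(m+q) C(m+q,q) a(a-1)...(a-q+1)
   V(a-q,b+q,i+m,i+m+1), the coefficients obeying Pascal's rule.  In d_t w I_2(w) the
   coefficient of ell_x^r ell_xx^s (d_x^m d_t w) (d_x^(m+1) w) then vanishes for even s and equals
   d_C(r,s,m) for odd s; it is zero for s = 1, and s >= 3 forces n >= 7. *)

Lemma lx_affine x0 t0 beta lam t x : lx x0 t0 beta lam t x = 2 * lam * (x - x0).
Proof. apply is_derive_unique; unfold ell, psi; auto_derive; [easy | ring]. Qed.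

Lemma lxx_const x0 t0 beta lam t x : lxx x0 t0 beta lam t x = 2 * lam.
Proof.
  unfold lxx, dx at 1; rewrite (Derive_ext _ (fun y => 2 * lam * (y - x0))).
  - apply is_derive_unique; auto_derive; [easy | ring].
  - intro y; apply lx_affine.
Qed.

Lemma dxn_pd w l i : dxn i (pd l w) = pd (repeat false i ++ l) w.
Proof. induction i as [|i IH]; simpl; [easy | now rewrite IH]. Qed.

Lemma dxn_selw_pd w i u : exists l, dxn i (selw w u) = pd l w.
Proof.
  destruct u.
  - exists (repeat false i ++ true :: nil); apply (dxn_pd w (true :: nil)).
  - exists (repeat false i ++ nil); apply (dxn_pd w nil).
Qed.

Section Smooth.

Variable w : R -> R -> R.
Hypothesis Hw : smooth2 w.

Lemma ex_derive_t_dxn i u t x : ex_derive (fun s => dxn i (selw w u) s x) t.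
Proof. destruct (dxn_selw_pd w i u) as [l ->]; exact (proj1 (Hw l t x)). Qed.

Lemma ex_derive_x_dxn i u t x : ex_derive (fun y => dxn i (selw w u) t y) x.
Proof. destruct (dxn_selw_pd w i u) as [l ->]; exact (proj1 (proj2 (Hw l t x))). Qed.

Lemma Derive_t_dxn i t x : Derive (fun s => dxn i w s x) t = dxn i (dt w) t x.
Proof.
  revert t x; induction i as [|i IH]; intros t x; [reflexivity |].
  simpl; unfold dx at 2.
  rewrite (Derive_ext (fun y => dxn i (dt w) t y) (fun y => Derive (fun s => dxn i w s y) t))
    by (intro y; now rewrite IH).
  unfold dx; change (dxn i w) with (dxn i (pd nil w)); rewrite dxn_pd.
  set (L := repeat false i ++ nil); clearbody L.
  apply Schwarz.
  - exists (mkposreal 1 Rlt_0_1); intros u v _ _.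
    split; [exact (proj1 (Hw L u v)) | split; [exact (proj1 (proj2 (Hw L u v))) | split]].
    + exact (proj1 (Hw (false :: L) u v)).
    + exact (proj1 (proj2 (Hw (true :: L) u v))).
  - apply continuity_2d_pt_filterlim, (Hw (true :: false :: L)).
  - apply continuity_2d_pt_filterlim, (Hw (false :: true :: L)).
Qed.

End Smooth.

Lemma sum_f_R0_shift f N : f N = 0 ->
  sum_f_R0 f N = sum_f_R0 (fun m => match m with O => 0 | S m' => f m' end) N.
Proof.
  intro H; destruct N as [|N]; [exact H |].
  rewrite tech5, H, Rplus_0_r, (decomp_sum _ (S N)) by lia.
  simpl; symmetry; apply Rplus_0_l.
Qed.

Lemma sum_f_R0_swap (F : nat -> nat -> R) N M :
  sum_f_R0 (fun i => sum_f_R0 (fun j => F i j) M) N =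
  sum_f_R0 (fun j => sum_f_R0 (fun i => F i j) N) M.
Proof.
  induction N as [|N IH]; simpl; [reflexivity |].
  rewrite IH, <- sum_plus; reflexivity.
Qed.

Lemma sum_f_R0_offset f N c : (forall k, (k < c)%nat -> f k = 0) ->
  sum_f_R0 f N = sum_f_R0 (fun s => if (s + c <=? N)%nat then f (s + c)%nat else 0) N.
Proof.
  revert f; induction c as [|c IH]; intros f Hf.
  - apply sum_eq; intros s Hs; rewrite Nat.add_0_r, (proj2 (Nat.leb_le s N) Hs); reflexivity.
  - rewrite (IH f) by (intros; apply Hf; lia).
    rewrite (sum_f_R0_shift (fun s => if (s + S c <=? N)%nat then f (s + S c)%nat else 0))
      by (destruct (Nat.leb_spec (N + S c) N); [lia | reflexivity]).
    apply sum_eq; intros [|s] _; simpl Nat.add.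
    + destruct (c <=? N)%nat; [apply Hf; lia | reflexivity].
    + now rewrite <- plus_n_Sm.
Qed.

Lemma sum_f_R0_select (G : nat -> R) N r0 :
  sum_f_R0 (fun r => if (r =? r0)%nat then G r else 0) N = if (r0 <=? N)%nat then G r0 else 0.
Proof.
  induction N as [|N IH]; cbn [sum_f_R0].
  - destruct r0; reflexivity.
  - rewrite IH.
    destruct (Nat.eqb_spec (S N) r0) as [<-|Hne].
    + rewrite (proj2 (Nat.leb_gt (S N) N)), Nat.leb_refl by lia.
      ring.
    + destruct (Nat.leb_spec r0 N); destruct (Nat.leb_spec r0 (S N)); try lia; ring.
Qed.

Lemma sum_f_R0_tail0 f M N : (M <= N)%nat ->
  (forall k, (M < k <= N)%nat -> f k = 0) -> sum_f_R0 f N = sum_f_R0 f M.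
Proof.
  intros HMN Hf; induction N as [|N IH].
  - now replace M with 0%nat by lia.
  - destruct (Nat.eq_dec M (S N)) as [->|Hne]; [reflexivity |].
    rewrite tech5, IH, (Hf (S N)) by (try intros; try apply Hf; lia); ring.
Qed.

Fixpoint falling (a q : nat) : R :=
  match q with O => 1 | S q' => INR a * falling (a - 1) q' end.

Lemma falling_lt a q : (a < q)%nat -> falling a q = 0.
Proof.
  revert a; induction q as [|q IH]; intros a H; [lia |].
  destruct a as [|a]; simpl; [ring | rewrite IH by lia; ring].
Qed.

Lemma rising_falling r q : rising r (S q) = falling (r + q) q.
Proof.
  unfold rising; rewrite Nat.sub_1_r; simpl pred.
  induction q as [|q IH]; [reflexivity |].
  rewrite seq_S, fold_right_app.
  transitivity
    ((INR r + INR (1 + q)) * fold_right (fun j acc => (INR r + INR j) * acc) 1 (seq 1 q)).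
  - change (fold_right _ 1 ((1 + q)%nat :: nil)) with ((INR r + INR (1 + q)) * 1).
    generalize (seq 1 q); intro l.
    induction l as [|k l IHl]; cbn [fold_right]; [ring | rewrite IHl; ring].
  - rewrite IH; cbn [falling].
    replace (r + S q - 1)%nat with (r + q)%nat by lia.
    rewrite (Nat.add_comm 1 q), <- Nat.add_succ_comm, Nat.add_0_r, !plus_INR; ring.
Qed.

Definition parts_coef (m q a : nat) : R :=
  (-1) ^ (m + q) * Binomial.C (m + q) q * falling a q.

Lemma parts_coef_0_succ q a : parts_coef 0 (S q) a = - INR a * parts_coef 0 q (a - 1).
Proof. unfold parts_coef; simpl; rewrite !C_n_n; ring. Qed.

Lemma parts_coef_succ_0 m a : parts_coef (S m) 0 a = - parts_coef m 0 a.
Proof. unfold parts_coef; rewrite !Nat.add_0_r, !C_n_0; simpl; ring. Qed.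

Lemma parts_coef_succ m q a :
  parts_coef (S m) (S q) a = - INR a * parts_coef (S m) q (a - 1) - parts_coef m (S q) a.
Proof.
  unfold parts_coef.
  replace (S m + S q)%nat with (S (S m + q)) by lia.
  replace (m + S q)%nat with (S m + q)%nat by lia.
  rewrite <- pascal by lia; simpl; ring.
Qed.

Lemma binom_C j k : (k <= j)%nat -> binom j k = Binomial.C j k.
Proof. intro H; unfold binom; now rewrite (proj2 (Nat.leb_le k j) H). Qed.

Lemma binom_gt j k : (j < k)%nat -> binom j k = 0.
Proof. intro H; unfold binom; now rewrite (proj2 (Nat.leb_gt k j) H). Qed.

Lemma pow_neg1_add_double a b c : (-1) ^ (a + 2 * b + c) = (-1) ^ a * (-1) ^ c.
Proof. rewrite !pow_add, pow_mult; replace ((-1) ^ 2) with 1 by ring; rewrite pow1; ring. Qed.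

Lemma pow_neg1_double a b : (-1) ^ (a + 2 * b) = (-1) ^ a.
Proof. rewrite <- (Nat.add_0_r (a + 2 * b)), pow_neg1_add_double; ring. Qed.

Lemma dC_parts r u m :
  binom (r + 4 * u + 2 * m + 3) (2 * u + 2 * m + 2) * (-1) ^ (r + 2 * u + 1)
    * parts_coef m (2 * u + 1) (r + 2 * u + 1)
  - binom (r + 4 * u + 2 * m + 3) 2 * binom (r + 4 * u + 2 * m + 1) (2 * u + 2 * m + 1)
    * (-1) ^ (r + 2 * u) * parts_coef m (2 * u) (r + 2 * u)
  = dC (r + 4 * u + 2 * m + 3) r (2 * u + 1) m.
Proof.
  unfold parts_coef, dC.
  rewrite !binom_C by lia.
  replace (rising r (2 * u + 1)) with (falling (r + 2 * u) (2 * u))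
    by (rewrite <- rising_falling; f_equal; lia).
  replace (falling (r + 2 * u + 1) (2 * u + 1))
    with (INR (r + 2 * u + 1) * falling (r + 2 * u) (2 * u))
    by (replace (2 * u + 1)%nat with (S (2 * u)) by lia; cbn [falling];
        now replace (r + 2 * u + 1 - 1)%nat with (r + 2 * u)%nat by lia).
  replace (m + (2 * u + 1))%nat with (m + 2 * u + 1)%nat by lia.
  replace (r + 4 * u + 2 * m + 3 + m)%nat with (r + 2 * (2 * u + m + 1) + (m + 1))%nat by lia.
  rewrite !pow_neg1_add_double, !pow_neg1_double.
  replace (2 * m + (2 * u + 1) + 1)%nat with (2 * u + 2 * m + 2)%nat by lia.
  unfold Binomial.C.
  replace (r + 4 * u + 2 * m + 3 - (2 * u + 2 * m + 2))%nat with (S (r + 2 * u)) by lia.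
  replace (r + 4 * u + 2 * m + 3 - 2)%nat with (r + 4 * u + 2 * m + 1)%nat by lia.
  replace (r + 4 * u + 2 * m + 1 - (2 * u + 2 * m + 1))%nat with (r + 2 * u)%nat by lia.
  replace (m + 2 * u + 1 - (2 * u + 1))%nat with m by lia.
  replace (m + 2 * u - 2 * u)%nat with m by lia.
  replace (2 * u + 2 * m + 2)%nat with (S (2 * u + 2 * m + 1)) by lia.
  replace (m + 2 * u + 1)%nat with (S (m + 2 * u)) by lia.
  replace (2 * u + 1)%nat with (S (2 * u)) by lia.
  rewrite !fact_simpl, !mult_INR, pow_add; cbn [fact].
  repeat rewrite ?S_INR, ?plus_INR, ?mult_INR.
  replace (INR 0) with 0 by reflexivity; replace (INR 1) with 1 by reflexivity;
  replace (INR 2) with 2 by (simpl; ring); replace (INR 3) with 3 by (simpl; ring);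
  replace (INR 4) with 4 by (simpl; ring).
  field; repeat split; try apply INR_fact_neq_0;
    pose proof (pos_INR r); pose proof (pos_INR u); pose proof (pos_INR m); lra.
Qed.

Lemma dC_one n r m : dC n r 1 m = 0.
Proof. unfold dC; simpl INR; unfold Rdiv; ring. Qed.

Lemma sumDC_small n F : (n <= 6)%nat -> sumDC n F = 0.
Proof.
  intro Hn; unfold sumDC.
  apply sum_eq_R0; intros r _; apply sum_eq_R0; intros s _; apply sum_eq_R0; intros m _.
  unfold inDC; destruct (Nat.eqb_spec (r + 2 * s + 2 * m + 1) n), (Nat.leb_spec 3 s);
    simpl; lia || reflexivity.
Qed.

(* The guard discards 2m+1 > d, where the truncated difference d - 2m - 1 is meaningless. *)
Definition parts_term (V : nat -> nat -> nat -> nat -> R) (d i a b m : nat) : R :=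
  if (2 * m + 1 <=? d)%nat
  then parts_coef m (d - 2 * m - 1) a
       * V (a - (d - 2 * m - 1))%nat (b + (d - 2 * m - 1))%nat (i + m)%nat (i + m + 1)%nat
  else 0.

Lemma parts_term_rec V d i a b m :
  parts_term V (S (S d)) i a b m =
  - INR a * parts_term V (S d) i (a - 1) (S b) m
  - match m with O => 0 | S m' => parts_term V d (S i) a b m' end.
Proof.
  unfold parts_term.
  destruct (Nat.leb_spec (2 * m + 1) (S (S d))) as [H2|H2];
  destruct (Nat.leb_spec (2 * m + 1) (S d)) as [H1|H1];
  destruct m as [|m]; try (destruct (Nat.leb_spec (2 * m + 1) d) as [H0|H0]); try lia; try ring.
  - replace (S (S d) - 2 * 0 - 1)%nat with (S d) by lia.
    replace (S d - 2 * 0 - 1)%nat with d by lia.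
    replace (a - 1 - d)%nat with (a - S d)%nat by lia.
    replace (S b + d)%nat with (b + S d)%nat by lia.
    rewrite parts_coef_0_succ; ring.
  - set (p := (S d - 2 * S m - 1)%nat).
    replace (S (S d) - 2 * S m - 1)%nat with (S p) by lia.
    replace (d - 2 * m - 1)%nat with (S p) by lia.
    replace (a - 1 - p)%nat with (a - S p)%nat by lia.
    replace (S b + p)%nat with (b + S p)%nat by lia.
    replace (S i + m)%nat with (i + S m)%nat by lia.
    rewrite parts_coef_succ; ring.
  - replace (S (S d) - 2 * S m - 1)%nat with 0%nat by lia.
    replace (d - 2 * m - 1)%nat with 0%nat by lia.
    replace (S i + m)%nat with (i + S m)%nat by lia.
    rewrite parts_coef_succ_0; ring.
Qed.

Lemma parts_term_short V d i a b m : (d < 2 * m + 1)%nat -> parts_term V d i a b m = 0.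
Proof. intro H; unfold parts_term; now rewrite (proj2 (Nat.leb_gt _ _) H). Qed.

Lemma parts_term_vanish V d i a b m : (a < d - 2 * m - 1)%nat -> parts_term V d i a b m = 0.
Proof.
  intro H; unfold parts_term, parts_coef.
  destruct (2 * m + 1 <=? d)%nat; [rewrite falling_lt by exact H; ring | reflexivity].
Qed.

Definition reduced_even n V k m : R :=
  if Nat.even k then binom n k * (-1) ^ (n - k) * parts_term V k 0 (n - k) 0 m else 0.

Definition reduced_odd n V j m : R :=
  if Nat.odd j
  then - binom n 2 * binom (n - 2) j * (-1) ^ (n - 2 - j) * parts_term V j 0 (n - 2 - j) 1 m
  else 0.

Lemma reduced_pair V r u m :
  let n := (r + 4 * u + 2 * m + 3)%nat in
  reduced_even n V (2 * u + 2 * m + 2) m + reduced_odd n V (2 * u + 2 * m + 1) m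
  = dC n r (2 * u + 1) m * V r (2 * u + 1)%nat m (m + 1)%nat.
Proof.
  intro n; unfold n, reduced_even, reduced_odd, parts_term.
  replace (2 * u + 2 * m + 2)%nat with (2 * (u + m + 1))%nat by lia.
  replace (2 * u + 2 * m + 1)%nat with (2 * (u + m) + 1)%nat by lia.
  rewrite Nat.even_even, Nat.odd_odd.
  rewrite (proj2 (Nat.leb_le (2 * m + 1) (2 * (u + m + 1)))),
    (proj2 (Nat.leb_le (2 * m + 1) (2 * (u + m) + 1))) by lia.
  replace (2 * (u + m + 1) - 2 * m - 1)%nat with (2 * u + 1)%nat by lia.
  replace (2 * (u + m) + 1 - 2 * m - 1)%nat with (2 * u)%nat by lia.
  replace (r + 4 * u + 2 * m + 3 - 2 * (u + m + 1))%nat with (r + 2 * u + 1)%nat by lia.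
  replace (r + 4 * u + 2 * m + 3 - 2 - (2 * (u + m) + 1))%nat with (r + 2 * u)%nat by lia.
  replace (r + 4 * u + 2 * m + 3 - 2)%nat with (r + 4 * u + 2 * m + 1)%nat by lia.
  replace (r + 2 * u + 1 - (2 * u + 1))%nat with r by lia.
  replace (r + 2 * u - 2 * u)%nat with r by lia.
  replace (0 + (2 * u + 1))%nat with (2 * u + 1)%nat by lia.
  replace (1 + 2 * u)%nat with (2 * u + 1)%nat by lia.
  rewrite <- dC_parts.
  replace (2 * (u + m + 1))%nat with (2 * u + 2 * m + 2)%nat by lia.
  replace (2 * (u + m) + 1)%nat with (2 * u + 2 * m + 1)%nat by lia.
  rewrite Nat.add_0_l; ring.
Qed.

(* For fixed m, the power ell_xx^s comes from k = s+2m+1 in the even sum of I_2 and from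
   j = s+2m in the odd one; both have the right parity only when s is odd. *)
Lemma reduced_collect n V s m :
  (if (s + (2 * m + 1) <=? n)%nat then reduced_even n V (s + (2 * m + 1)) m else 0)
  + match s with
    | O => 0
    | S u => if (u + (2 * m + 1) <=? n)%nat then reduced_odd n V (u + (2 * m + 1)) m else 0
    end
  = if ((2 * s + 2 * m + 1 <=? n) && (3 <=? s) && Nat.odd s)%bool
    then dC n (n - (2 * s + 2 * m + 1)) s m * V (n - (2 * s + 2 * m + 1))%nat s m (m + 1)%nat
    else 0.
Proof.
  destruct (Nat.Even_or_Odd s) as [[u ->]|[u ->]].
  - rewrite Nat.odd_even, Bool.andb_false_r.
    replace (2 * u + (2 * m + 1))%nat with (2 * (u + m) + 1)%nat by lia.
    unfold reduced_even; rewrite Nat.even_odd.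
    destruct u as [|u]; [destruct (_ <=? n)%nat; simpl; ring |].
    replace (2 * S u)%nat with (S (2 * u + 1)) by lia; cbv iota beta.
    unfold reduced_odd; replace (2 * u + 1 + (2 * m + 1))%nat with (2 * (u + m + 1))%nat by lia.
    rewrite Nat.odd_even.
    destruct (_ <=? n)%nat; destruct (_ <=? n)%nat; ring.
  - rewrite Nat.odd_odd, Bool.andb_true_r, (Nat.add_1_r (2 * u)); cbv iota beta.
    replace (S (2 * u) + (2 * m + 1))%nat with (2 * u + 2 * m + 2)%nat by lia.
    replace (2 * u + (2 * m + 1))%nat with (2 * u + 2 * m + 1)%nat by lia.
    destruct (Nat.leb_spec (2 * S (2 * u) + 2 * m + 1) n) as [Hn|Hn].
    + set (r := (n - (2 * S (2 * u) + 2 * m + 1))%nat).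
      assert (Hr : n = (r + 4 * u + 2 * m + 3)%nat) by (unfold r; lia).
      clearbody r; subst n.
      rewrite !(proj2 (Nat.leb_le _ _)) by lia.
      replace (S (2 * u)) with (2 * u + 1)%nat by lia.
      rewrite reduced_pair.
      destruct u as [|u]; [rewrite dC_one; simpl; ring |].
      now rewrite (proj2 (Nat.leb_le 3 (2 * S u + 1))) by lia.
    + unfold reduced_even, reduced_odd.
      rewrite (parts_term_vanish _ (2 * u + 2 * m + 2)) by lia.
      destruct (Nat.leb_spec (2 * u + 2 * m + 1) (n - 2)).
      * rewrite (parts_term_vanish _ (2 * u + 2 * m + 1)) by lia.
        destruct (Nat.even _), (Nat.odd _), (_ <=? n)%nat, (_ <=? n)%nat; simpl; ring.
      * rewrite (binom_gt (n - 2)) by lia.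
        destruct (Nat.even _), (Nat.odd _), (_ <=? n)%nat, (_ <=? n)%nat; simpl; ring.
Qed.
Lemma sumDC_inner n s m (G : nat -> R) :
  sum_f_R0 (fun r => if inDC n r s m then G r else 0) n =
  if ((2 * s + 2 * m + 1 <=? n) && (3 <=? s) && Nat.odd s)%bool
  then G (n - (2 * s + 2 * m + 1))%nat else 0.
Proof.
  set (c := (2 * s + 2 * m + 1)%nat).
  rewrite (sum_eq _ (fun r => if (r =? n - c)%nat
    then (if ((c <=? n) && (3 <=? s) && Nat.odd s)%bool then G (n - c)%nat else 0) else 0)).
  - rewrite sum_f_R0_select, (proj2 (Nat.leb_le (n - c) n)) by lia; reflexivity.
  - intros r _; unfold inDC.
    destruct (Nat.eqb_spec (r + 2 * s + 2 * m + 1) n), (Nat.eqb_spec r (n - c)),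
      (Nat.leb_spec c n); unfold c in *; try lia; try reflexivity.
    replace (n - (2 * s + 2 * m + 1))%nat with r by lia; reflexivity.
Qed.

Lemma reduced_sum n V : (2 <= n)%nat ->
  sum_f_R0 (fun k => sum_f_R0 (fun m => reduced_even n V k m) n) n
  + sum_f_R0 (fun j => sum_f_R0 (fun m => reduced_odd n V j m) n) (n - 2)
  = sumDC n (fun r s m => dC n r s m * V r s m (m + 1)%nat).
Proof.
  intro Hn.
  rewrite <- (sum_f_R0_tail0 (fun j => sum_f_R0 (fun m => reduced_odd n V j m) n) (n - 2) n)
    by (lia || (intros j Hj; apply sum_eq_R0; intros m _; unfold reduced_odd;
        destruct (Nat.odd j); [rewrite (binom_gt (n - 2) j) by lia; ring | reflexivity])).
  rewrite (sum_f_R0_swap (fun k m => reduced_even n V k m)),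
    (sum_f_R0_swap (fun j m => reduced_odd n V j m)), <- sum_plus.
  unfold sumDC.
  set (D r s m := if inDC n r s m then dC n r s m * V r s m (m + 1)%nat else 0).
  rewrite sum_f_R0_swap,
    (sum_eq (fun s => sum_f_R0 (fun r => sum_f_R0 (fun m => D r s m) n) n)
       (fun s => sum_f_R0 (fun m => sum_f_R0 (fun r => D r s m) n) n))
    by (intros; apply sum_f_R0_swap).
  rewrite (sum_f_R0_swap (fun s m => sum_f_R0 (fun r => D r s m) n)).
  apply sum_eq; intros m _.
  rewrite (sum_f_R0_offset (fun k => reduced_even n V k m) n (2 * m + 1)),
    (sum_f_R0_offset (fun j => reduced_odd n V j m) n (2 * m + 1))
    by (intros k Hk; unfold reduced_even, reduced_odd;
        destruct (Nat.even k), (Nat.odd k); rewrite ?parts_term_short by lia; ring).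
  rewrite (sum_f_R0_shift (fun s =>
      if (s + (2 * m + 1) <=? n)%nat then reduced_odd n V (s + (2 * m + 1)) m else 0))
    by (now rewrite (proj2 (Nat.leb_gt _ _)) by lia).
  rewrite <- sum_plus; apply sum_eq; intros s _.
  unfold D; now rewrite sumDC_inner, <- reduced_collect.
Qed.

Section Divergence.

Variables (x0 t0 beta lam : R) (w : R -> R -> R).
Hypothesis Hw : smooth2 w.

Lemma eval_term_affine T t x :
  eval_term x0 t0 beta lam w T t x =
  tc T * (2 * lam * (x - x0)) ^ ta T * (2 * lam) ^ tb T
    * dxn (ti T) (selw w (tu1 T)) t x * dxn (tj T) (selw w (tu2 T)) t x.
Proof. unfold eval_term; now rewrite lx_affine, lxx_const. Qed.

Lemma ex_derive_t_eval_expr A t x : ex_derive (fun s => eval_expr x0 t0 beta lam w A s x) t.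
Proof.
  induction A as [|T A IH]; simpl; [apply ex_derive_const |].
  apply (ex_derive_plus (fun s => eval_term _ _ _ _ _ T s x)); [| exact IH].
  apply (ex_derive_ext (fun s => tc T * (2 * lam * (x - x0)) ^ ta T * (2 * lam) ^ tb T
    * dxn (ti T) (selw w (tu1 T)) s x * dxn (tj T) (selw w (tu2 T)) s x));
    [intro; symmetry; apply eval_term_affine |].
  auto_derive; refine (conj _ (conj _ I)); apply (ex_derive_t_dxn w Hw).
Qed.

Lemma ex_derive_x_eval_expr A t x : ex_derive (fun y => eval_expr x0 t0 beta lam w A t y) x.
Proof.
  induction A as [|T A IH]; simpl; [apply ex_derive_const |].
  apply (ex_derive_plus (fun y => eval_term _ _ _ _ _ T t y)); [| exact IH].
  apply (ex_derive_ext (fun y => tc T * (2 * lam * (y - x0)) ^ ta T * (2 * lam) ^ tb T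
    * dxn (ti T) (selw w (tu1 T)) t y * dxn (tj T) (selw w (tu2 T)) t y));
    [intro; symmetry; apply eval_term_affine |].
  auto_derive; refine (conj _ (conj _ I)); apply (ex_derive_x_dxn w Hw).
Qed.

Lemma eval_expr_app A A' t x :
  eval_expr x0 t0 beta lam w (A ++ A') t x =
  eval_expr x0 t0 beta lam w A t x + eval_expr x0 t0 beta lam w A' t x.
Proof. induction A as [|T A IH]; simpl; [ring | rewrite IH; ring]. Qed.

Definition scale_terms (c : R) (A : list term) : list term :=
  map (fun T => mkTerm (c * tc T) (ta T) (tb T) (ti T) (tj T) (tu1 T) (tu2 T)) A.

Lemma eval_expr_scale c A t x :
  eval_expr x0 t0 beta lam w (scale_terms c A) t x = c * eval_expr x0 t0 beta lam w A t x.
Proof. induction A as [|T A IH]; simpl; [ring | rewrite IH; unfold eval_term; simpl; ring]. Qed.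

Definition divergence (A B : list term) (t x : R) : R :=
  Derive (fun s => eval_expr x0 t0 beta lam w A s x) t
  + Derive (fun y => eval_expr x0 t0 beta lam w B t y) x.

Lemma divergence_nil t x : divergence nil nil t x = 0.
Proof. unfold divergence; simpl; rewrite !Derive_const; ring. Qed.

Lemma Derive_t_eval_expr_app A A' t x :
  Derive (fun s => eval_expr x0 t0 beta lam w (A ++ A') s x) t =
  Derive (fun s => eval_expr x0 t0 beta lam w A s x) t
  + Derive (fun s => eval_expr x0 t0 beta lam w A' s x) t.
Proof.
  rewrite (Derive_ext _ _ _ (fun s => eval_expr_app A A' s x)).
  apply Derive_plus; apply ex_derive_t_eval_expr.
Qed.

Lemma Derive_x_eval_expr_app B B' t x :
  Derive (fun y => eval_expr x0 t0 beta lam w (B ++ B') t y) x =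
  Derive (fun y => eval_expr x0 t0 beta lam w B t y) x
  + Derive (fun y => eval_expr x0 t0 beta lam w B' t y) x.
Proof.
  rewrite (Derive_ext _ _ _ (fun y => eval_expr_app B B' t y)).
  apply Derive_plus; apply ex_derive_x_eval_expr.
Qed.

Lemma divergence_app A B A' B' t x :
  divergence (A ++ A') (B ++ B') t x = divergence A B t x + divergence A' B' t x.
Proof. unfold divergence; rewrite Derive_t_eval_expr_app, Derive_x_eval_expr_app; ring. Qed.

Lemma divergence_scale c A B t x :
  divergence (scale_terms c A) (scale_terms c B) t x = c * divergence A B t x.
Proof.
  unfold divergence.
  rewrite (Derive_ext _ _ _ (fun s => eval_expr_scale c A s x)),
    (Derive_ext _ _ _ (fun y => eval_expr_scale c B t y)), !Derive_scal.
  now rewrite Rmult_plus_distr_l.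
Qed.

Definition div_congr (F G : R -> R -> R) : Prop :=
  exists A B, forall t x, F t x = divergence A B t x + G t x.

Lemma div_congr_refl F : div_congr F F.
Proof. exists nil, nil; intros t x; rewrite divergence_nil; ring. Qed.

Lemma div_congr_ext F G F' G' :
  div_congr F G -> (forall t x, F' t x = F t x) -> (forall t x, G t x = G' t x) ->
  div_congr F' G'.
Proof. intros [A [B H]] HF HG; exists A, B; intros t x; rewrite HF, H, HG; ring. Qed.

Lemma div_congr_add F G F' G' :
  div_congr F G -> div_congr F' G' ->
  div_congr (fun t x => F t x + F' t x) (fun t x => G t x + G' t x).
Proof.
  intros [A [B H]] [A' [B' H']]; exists (A ++ A'), (B ++ B'); intros t x.
  rewrite H, H', divergence_app; ring.
Qed.

Lemma div_congr_trans F G H : div_congr F G -> div_congr G H -> div_congr F H.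
Proof.
  intros [A [B HFG]] [A' [B' HGH]]; exists (A ++ A'), (B ++ B'); intros t x.
  rewrite HFG, HGH, divergence_app; ring.
Qed.

Lemma div_congr_scale c F G :
  div_congr F G -> div_congr (fun t x => c * F t x) (fun t x => c * G t x).
Proof.
  intros [A [B H]]; exists (scale_terms c A), (scale_terms c B); intros t x.
  rewrite H, divergence_scale; ring.
Qed.

Lemma div_congr_sum (F G : nat -> R -> R -> R) N :
  (forall k, (k <= N)%nat -> div_congr (F k) (G k)) ->
  div_congr (fun t x => sum_f_R0 (fun k => F k t x) N) (fun t x => sum_f_R0 (fun k => G k t x) N).
Proof.
  induction N as [|N IH]; intro H; simpl; [apply H; lia |].
  apply div_congr_add; [apply IH; intros k Hk |]; apply H; lia.
Qed.

Definition mono (a b i j : nat) (t x : R) : R :=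
  lx x0 t0 beta lam t x ^ a * lxx x0 t0 beta lam t x ^ b * dxn i (dt w) t x * dxn j w t x.

Lemma mono_diag_congr a b i : div_congr (mono a b i i) (fun _ _ => 0).
Proof.
  exists (mkTerm (/ 2) a b i i false false :: nil), nil; intros t x.
  unfold divergence; simpl; rewrite Derive_const.
  rewrite (Derive_ext _ (fun s => / 2 * (2 * lam * (x - x0)) ^ a * (2 * lam) ^ b
    * dxn i w s x * dxn i w s x)) by (intro s; rewrite eval_term_affine; simpl; ring).
  erewrite is_derive_unique.
  2:{ auto_derive; [| reflexivity].
      exact (conj (ex_derive_t_dxn w Hw i false t x) (conj (ex_derive_t_dxn w Hw i false t x) I)). }
  rewrite Derive_t_dxn by exact Hw.
  unfold mono; rewrite lx_affine, lxx_const; field.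
Qed.

Lemma mono_parts_congr a b i j :
  div_congr (mono a b i (S j))
    (fun t x => - INR a * mono (a - 1) (S b) i j t x - mono a b (S i) j t x).
Proof.
  exists nil, (mkTerm 1 a b i j true false :: nil); intros t x.
  unfold divergence; simpl; rewrite Derive_const.
  rewrite (Derive_ext _ (fun y => (2 * lam) ^ b * (2 * lam * (y - x0)) ^ a
    * dxn i (dt w) t y * dxn j w t y)) by (intro y; rewrite eval_term_affine; simpl; ring).
  erewrite is_derive_unique.
  2:{ auto_derive; [| reflexivity].
      exact (conj (ex_derive_x_dxn w Hw i true t x) (conj (ex_derive_x_dxn w Hw j false t x) I)). }
  change (Derive (fun y => dxn i (dt w) t y) x) with (dxn (S i) (dt w) t x).
  change (Derive (fun y => dxn j w t y) x) with (dxn (S j) w t x).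
  unfold mono; rewrite !lx_affine, !lxx_const, Nat.sub_1_r.
  rewrite <- tech_pow_Rmult; change (x + - x0) with (x - x0); ring.
Qed.

Lemma mono_reduce d : forall N i a b, (d <= N)%nat ->
  div_congr (mono a b i (i + d))
    (fun t x => sum_f_R0 (fun m =>
       parts_term (fun a' b' i' j' => mono a' b' i' j' t x) d i a b m) N).
Proof.
  induction d as [d IH] using (well_founded_induction lt_wf); intros N i a b HN.
  destruct d as [|[|d]].
  - apply (div_congr_ext _ _ _ _ (mono_diag_congr a b i)); intros t x;
      [now rewrite Nat.add_0_r |].
    symmetry; apply sum_eq_R0; intros m _; unfold parts_term.
    destruct (Nat.leb_spec (2 * m + 1) 0); [lia | reflexivity].
  - apply (div_congr_ext _ _ _ _ (div_congr_refl (mono a b i (i + 1)))); intros t x;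
      [reflexivity |].
    destruct N as [|N]; [lia |].
    rewrite decomp_sum by lia.
    rewrite sum_eq_R0 by (intros m _; unfold parts_term;
      destruct (Nat.leb_spec (2 * S m + 1) 1); [lia | reflexivity]).
    unfold parts_term, parts_coef; simpl; rewrite C_n_0, Nat.sub_0_r, !Nat.add_0_r; ring.
  - eapply div_congr_trans.
    { apply (div_congr_ext _ _ _ _ (mono_parts_congr a b i (i + S d))); intros t x;
        [now rewrite Nat.add_succ_r | reflexivity]. }
    eapply div_congr_ext.
    { apply div_congr_add; [apply (div_congr_scale (- INR a)) | apply (div_congr_scale (-1))].
      - apply (IH (S d) ltac:(lia) N i (a - 1)%nat (S b)); lia.
      - apply (IH d ltac:(lia) N (S i) a b); lia. }
    all: intros t x; cbv beta.
    + replace (i + S d)%nat with (S i + d)%nat by lia; ring.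
    + rewrite (sum_f_R0_shift (fun m => parts_term _ d (S i) a b m)).
      2:{ unfold parts_term; destruct (Nat.leb_spec (2 * N + 1) d); [lia | reflexivity]. }
      rewrite !scal_sum, <- sum_plus; apply sum_eq; intros m _.
      rewrite parts_term_rec; destruct m; ring.
Qed.

Lemma dt_mul_I2 n t x :
  dt w t x * I2 n x0 t0 beta lam w t x =
  sum_f_R0 (fun k => if Nat.even k
    then binom n k * (-1) ^ (n - k) * mono (n - k) 0 0 k t x else 0) n
  + sum_f_R0 (fun j => if Nat.odd j
    then - binom n 2 * binom (n - 2) j * (-1) ^ (n - 2 - j) * mono (n - 2 - j) 1 0 j t x
    else 0) (n - 2).
Proof.
  unfold I2.
  match goal with |- _ * (?S1 - ?c * ?l * ?S2) = _ =>
    replace (dt w t x * (S1 - c * l * S2)) with (dt w t x * S1 + - (dt w t x * c * l) * S2) by ring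
  end.
  rewrite !scal_sum; unfold mono; cbn [dxn pow].
  f_equal; apply sum_eq; intros k _;
    [destruct (Nat.even k) | destruct (Nat.odd k)]; ring.
Qed.

Lemma mono_reduce_scaled c d a b N : (d <= N)%nat ->
  div_congr (fun t x => c * mono a b 0 d t x)
    (fun t x => sum_f_R0 (fun m =>
       c * parts_term (fun a' b' i' j' => mono a' b' i' j' t x) d 0 a b m) N).
Proof.
  intro HN.
  apply (div_congr_ext _ _ _ _ (div_congr_scale c _ _ (mono_reduce d N 0 a b HN)));
    intros t x; [reflexivity | rewrite scal_sum; apply sum_eq; intros; ring].
Qed.

Lemma dt_mul_I2_congr n : (2 <= n)%nat ->
  div_congr (fun t x => dt w t x * I2 n x0 t0 beta lam w t x)
    (fun t x => sumDC n (fun r s m =>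
       dC n r s m * lx x0 t0 beta lam t x ^ r * lxx x0 t0 beta lam t x ^ s
         * dxn m (dt w) t x * dxn (m + 1) w t x)).
Proof.
  intro Hn.
  set (V t x := fun a b i j => mono a b i j t x).
  eapply (div_congr_ext _ (fun t x =>
      sum_f_R0 (fun k => sum_f_R0 (fun m => reduced_even n (V t x) k m) n) n
    + sum_f_R0 (fun j => sum_f_R0 (fun m => reduced_odd n (V t x) j m) n) (n - 2))).
  2: intros t x; apply dt_mul_I2.
  2: intros t x; rewrite reduced_sum by exact Hn;
     unfold sumDC; repeat (apply sum_eq; intros ? _);
     destruct inDC; [unfold V, mono; ring | reflexivity].
  apply div_congr_add; apply div_congr_sum; intros k Hk.
  - unfold reduced_even; destruct (Nat.even k).
    + apply mono_reduce_scaled; exact Hk.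
    + apply (div_congr_ext _ _ _ _ (div_congr_refl (fun _ _ => 0))); intros t x;
        [reflexivity | symmetry; apply sum_eq_R0; reflexivity].
  - unfold reduced_odd; destruct (Nat.odd k).
    + apply mono_reduce_scaled; lia.
    + apply (div_congr_ext _ _ _ _ (div_congr_refl (fun _ _ => 0))); intros t x;
        [reflexivity | symmetry; apply sum_eq_R0; reflexivity].
Qed.

End Divergence.

Theorem proposition4p1 (n : nat) (x0 t0 beta lam : R) (w : R -> R -> R) :
  (2 <= n)%nat -> 0 < beta -> 0 < lam -> smooth2 w ->
  exists A B : list term,
    (forall t x : R,
      dt w t x * I2 n x0 t0 beta lam w t x =
        Derive (fun s => eval_expr x0 t0 beta lam w A s x) t
      + Derive (fun y => eval_expr x0 t0 beta lam w B t y) x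
      + sumDC n (fun r s m =>
          dC n r s m * (lx x0 t0 beta lam t x) ^ r * (lxx x0 t0 beta lam t x) ^ s
            * dxn m (dt w) t x * dxn (m + 1) w t x)) /\
    ((n <= 6)%nat -> forall t x : R,
      dt w t x * I2 n x0 t0 beta lam w t x =
        Derive (fun s => eval_expr x0 t0 beta lam w A s x) t
      + Derive (fun y => eval_expr x0 t0 beta lam w B t y) x).
Proof.
  intros Hn _ _ Hw.
  destruct (dt_mul_I2_congr x0 t0 beta lam w Hw n Hn) as [A [B HAB]].
  exists A, B; split; [exact HAB |].
  intros Hn6 t x; rewrite HAB, sumDC_small by exact Hn6; apply Rplus_0_r.
Qed.
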